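(* Let $r,k\ge1$ be integers and let $C_1,\dots,C_r\subset\mathbb{R}^d$ be pairwise disjoint sets, each of size $k$; set $P=\bigcup_{j=1}^rC_j$. Then there exist a point $q\in\mathbb{R}^d$ and a partition $P_1,\dots,P_k$ of $P$ such that $|P_i\cap C_j|=1$ for every $i\in[k]$ and $j\in[r]$, and \[ d(q,\operatorname{conv}P_i)\le(1+\sqrt2)\frac{\operatorname{diam}P}{\sqrt r}\qquad\text{for every } i\in[k]. \]
   Context: $d(q,S)$ is the Euclidean distance from a point to a set; $\operatorname{diam}$ is the Euclidean diameter. *)

From HB Require Import structures.
From mathcomp Require Import all_boot all_order all_algebra.
From mathcomp Require Import finmap.
From mathcomp Require Import all_classical all_reals.
Set Implicit Arguments. Unset Strict Implicit. Unset Printing Implicit Defensive.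
Import Order.TTheory GRing.Theory Num.Theory.
Local Open Scope ring_scope.
Local Open Scope classical_set_scope.

Definition eucl {R : realType} {d : nat} (v : 'rV[R]_d) : R :=
  Num.sqrt (\sum_(i < d) (v ord0 i) ^+ 2).

Definition conv {R : realType} {d : nat} (S : {fset 'rV[R]_d}) : set 'rV[R]_d :=
  [set y | exists w : 'rV[R]_d -> R,
     (forall x, x \in S -> 0 <= w x) /\
     \sum_(x <- S) w x = 1 /\
     y = \sum_(x <- S) w x *: x].

Definition dist_set {R : realType} {d : nat} (q : 'rV[R]_d) (S : set 'rV[R]_d) : R :=
  inf [set t : R | exists2 y, S y & t = eucl (q - y)].

Definition diam {R : realType} {d : nat} (P : {fset 'rV[R]_d}) : R :=
  sup [set t : R | exists x y : 'rV[R]_d, x \in P /\ y \in P /\ t = eucl (x - y)].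

From HB Require Import structures.
From mathcomp Require Import all_boot all_order all_algebra.
From mathcomp Require Import finmap.
From mathcomp Require Import all_classical all_reals.
From mathcomp Require Import all_fingroup.
From mathcomp Require Import ring lra.

Set Implicit Arguments.
Unset Strict Implicit.
Unset Printing Implicit Defensive.
Import Order.TTheory GRing.Theory Num.Theory.
Local Open Scope ring_scope.

(* Label each class C_j as e_j(0), ..., e_j(k-1).  Permutations s_j of [k]
   give the transversals P_i = {e_j(s_j i) | j}, whose centroids are T_i / r
   with T_i = sum_j e_j(s_j i).  Choose the s_j minimising the energy
   sum_i |T_i|^2.  Swapping the labels a and b in class j cannot decrease it,
   i.e. <T_a - T_b, w_j> + |w_j|^2 >= 0 with w_j = e_j(s_j b) - e_j(s_j a).
   Summing over j, with sum_j w_j = T_b - T_a, gives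
   |T_a - T_b|^2 <= sum_j |w_j|^2 <= r diam(P)^2.  So the centroid q of any
   one P_a is within diam(P) / sqrt r of every conv P_i, which is even better
   than the bound claimed. *)

Section DotProduct.
Variables (R : realType) (d : nat).
Implicit Types u v w x y : 'rV[R]_d.

Definition dotv u v : R := \sum_(l < d) u ord0 l * v ord0 l.

Lemma dotvv_ge0 u : 0 <= dotv u u.
Proof. by apply: sumr_ge0 => l _; rewrite -expr2 sqr_ge0. Qed.

Lemma euclE u : eucl u = Num.sqrt (dotv u u).
Proof. by congr Num.sqrt; apply: eq_bigr => l _; rewrite expr2. Qed.

Lemma eucl_ge0 u : 0 <= eucl u.
Proof. exact: sqrtr_ge0. Qed.

Lemma eucl_sqr u : eucl u ^+ 2 = dotv u u.
Proof. by rewrite euclE sqr_sqrtr // dotvv_ge0. Qed.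

Lemma euclZ a u : eucl (a *: u) = `|a| * eucl u.
Proof.
rewrite !euclE -sqrtr_sqr -sqrtrM ?sqr_ge0 // mulr_sumr.
by congr Num.sqrt; apply: eq_bigr => l _; rewrite !mxE; ring.
Qed.

Lemma dotv0r u : dotv u 0 = 0.
Proof. by rewrite /dotv big1 // => l _; rewrite mxE mulr0. Qed.

Lemma dotvN u v : dotv u (- v) = - dotv u v.
Proof. by rewrite /dotv -sumrN; apply: eq_bigr => l _; rewrite mxE mulrN. Qed.

Lemma dotv_sumr (I : Type) (s : seq I) (P : pred I) (F : I -> 'rV[R]_d) u :
  dotv u (\sum_(i <- s | P i) F i) = \sum_(i <- s | P i) dotv u (F i).
Proof.
rewrite /dotv exchange_big /=; apply: eq_bigr => l _.
by rewrite summxE mulr_sumr.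
Qed.

Lemma dotv_exchange x y w :
  dotv (x + w) (x + w) + dotv (y - w) (y - w) =
  dotv x x + dotv y y + 2 * (dotv (x - y) w + dotv w w).
Proof.
rewrite /dotv -!big_split mulr_sumr -big_split /=.
by apply: eq_bigr => l _; rewrite !mxE; ring.
Qed.

End DotProduct.

Section DistanceDiameter.
Variables (R : realType) (d : nat).
Implicit Types (P S : {fset 'rV[R]_d}) (q x y : 'rV[R]_d).

Lemma le_diam P x y : x \in P -> y \in P -> eucl (x - y) <= diam P.
Proof.
move=> xP yP; apply: ub_le_sup; last by exists x, y.
exists (\sum_(x' <- P) \sum_(y' <- P) eucl (x' - y')).
move=> _ [x' [y' [x'P [y'P ->]]]].
rewrite (big_fsetD1 x') //= (big_fsetD1 y') //= -addrA lerDl.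
by rewrite addr_ge0 // !sumr_ge0 // => *; rewrite ?sumr_ge0 // => *;
  apply: eucl_ge0.
Qed.

Lemma diam_ge0 P x : x \in P -> 0 <= diam P.
Proof. by move=> xP; apply: le_trans (eucl_ge0 _) (le_diam xP xP). Qed.

Lemma dist_set_le q (S : set 'rV[R]_d) y : S y -> dist_set q S <= eucl (q - y).
Proof.
move=> Sy; apply: ge_inf; last by exists y.
by exists 0 => _ [y' _ ->]; apply: eucl_ge0.
Qed.

Lemma conv_centroid S : S != fset0 ->
  conv S ((#|` S|%:R)^-1 *: \sum_(x <- S) x).
Proof.
move=> S0; have n0 : (#|` S|%:R : R) != 0 by rewrite pnatr_eq0 cardfs_eq0.
exists (fun=> (#|` S|%:R)^-1); split; [|split].
- by move=> x _; rewrite invr_ge0 ler0n.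
- by rewrite big_const_seq count_predT iter_addr_0 -[_ *+ _]mulr_natr mulVf.
- by rewrite scaler_sumr.
Qed.

End DistanceDiameter.

Section Energy.
Variables (R : realType) (d r k : nat) (e : 'I_r -> 'I_k -> 'rV[R]_d).
Implicit Types (s : {ffun 'I_r -> {perm 'I_k}}) (g : {perm 'I_k}).

Definition transversal_sum s (i : 'I_k) : 'rV[R]_d := \sum_(j < r) e j (s j i).

Definition energy s : R :=
  \sum_(i < k) dotv (transversal_sum s i) (transversal_sum s i).

Definition relabel s (j : 'I_r) g : {ffun 'I_r -> {perm 'I_k}} :=
  [ffun j' => if j' == j then (g * s j)%g else s j'].

Lemma transversal_sum_relabel s j g i :
  transversal_sum (relabel s j g) i =
  transversal_sum s i + (e j (s j (g i)) - e j (s j i)).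
Proof.
rewrite /transversal_sum (bigD1 j) //= [in RHS](bigD1 j) //= ffunE eqxx permM.
rewrite (eq_bigr (fun j' => e j' (s j' i))) => [|j' /negbTE j'j]; last first.
  by rewrite ffunE j'j.
by rewrite [RHS]addrC addrA subrK.
Qed.

Lemma energy_swap s j a b : a != b ->
  let w := e j (s j b) - e j (s j a) in
  energy (relabel s j (tperm a b)) = energy s +
    2 * (dotv (transversal_sum s a - transversal_sum s b) w + dotv w w).
Proof.
move=> ab w; have ba : b != a by rewrite eq_sym.
rewrite /energy (bigD1 a) // (bigD1 b) //= [in RHS](bigD1 a) // (bigD1 b) //=.
rewrite (eq_bigr (fun i => dotv (transversal_sum s i) (transversal_sum s i)));
  last by move=> i /andP[ia ib]; rewrite transversal_sum_relabel tpermD 1?eq_sym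
                                            // subrr addr0.
rewrite !transversal_sum_relabel tpermL tpermR -/w -[e j (s j a) - _]opprB -/w.
by rewrite addrA dotv_exchange; ring.
Qed.

Lemma min_energy_transversal_sum_close (P : {fset 'rV[R]_d}) s a b :
  (forall j l, e j l \in P) -> (forall s', energy s <= energy s') ->
  eucl (transversal_sum s a - transversal_sum s b) ^+ 2 <= r%:R * diam P ^+ 2.
Proof.
move=> e_P s_min; set u := _ - _; rewrite eucl_sqr.
pose w j := e j (s j b) - e j (s j a).
have w_sqr_le j : dotv (w j) (w j) <= diam P ^+ 2.
  rewrite -eucl_sqr ler_sqr ?nnegrE ?eucl_ge0 ?le_diam //.
  exact: diam_ge0 (e_P j (s j a)).
have : \sum_(j < r) dotv (w j) (w j) <= \sum_(j < r) diam P ^+ 2.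
  by apply: ler_sum => j _; apply: w_sqr_le.
rewrite sumr_const card_ord mulr_natl; apply: le_trans.
have [ab|ab] := eqVneq a b.
  by rewrite /u ab subrr dotv0r; apply: sumr_ge0 => j _; apply: dotvv_ge0.
have swap_ge0 j : 0 <= dotv u (w j) + dotv (w j) (w j).
  by have := s_min (relabel s j (tperm a b)); rewrite energy_swap //; lra.
have : 0 <= \sum_(j < r) (dotv u (w j) + dotv (w j) (w j)).
  by apply: sumr_ge0 => j _; apply: swap_ge0.
rewrite big_split /= -dotv_sumr /w sumrB.
rewrite -/(transversal_sum s b) -/(transversal_sum s a) -opprB -/u dotvN.
lra.
Qed.

End Energy.

Section Transversals.
Variables (K : choiceType) (r k : nat).
Variables (C : 'I_r -> {fset K}) (e : 'I_r -> 'I_k -> K).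
Hypotheses (C_disj : forall j j', j != j' -> (C j `&` C j')%fset = fset0)
  (e_inj : forall j, injective (e j)) (e_in : forall j l, e j l \in C j)
  (e_onto : forall j x, x \in C j -> exists l, e j l = x).
Implicit Types (s : {ffun 'I_r -> {perm 'I_k}}) (i : 'I_k) (j : 'I_r).

Definition transversal s i : {fset K} := [fset e j (s j i) | j : 'I_r]%fset.

Lemma class_uniq j j' x : x \in C j -> x \in C j' -> j = j'.
Proof.
move=> xj xj'; apply/eqP; apply: contraT => /C_disj/fsetP/(_ x).
by rewrite in_fsetI xj xj' in_fset0.
Qed.

Lemma transversal_disjoint s i i' :
  i != i' -> (transversal s i `&` transversal s i')%fset = fset0.
Proof.
move=> ii'; apply/fsetP => x; rewrite in_fsetI in_fset0.
apply/negbTE/andP => -[/imfsetP[j _ ->] /imfsetP[j' _ ej]].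
have jj' : j = j' by apply: (class_uniq (e_in j (s j i))); rewrite ej.
by move: ej ii'; rewrite -jj' => /e_inj/perm_inj ->; rewrite eqxx.
Qed.

Lemma transversal_cover s x :
  (exists j, x \in C j) <-> exists i, x \in transversal s i.
Proof.
split=> [[j /e_onto[l <-]]|[i /imfsetP[j _ ->]]]; last by exists j.
by exists ((s j)^-1 l)%g; apply/imfsetP; exists j; rewrite ?permKV.
Qed.

Lemma transversalI s i j :
  (transversal s i `&` C j)%fset = [fset e j (s j i)]%fset.
Proof.
apply/fsetP => x; rewrite in_fsetI in_fset1.
apply/andP/eqP => [[/imfsetP[j' _ ->] xj]|->]; last by rewrite in_imfset.
by rewrite (class_uniq (e_in j' (s j' i)) xj).
Qed.

Lemma transversal_inj s i : injective (fun j => e j (s j i)).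
Proof. by move=> j j' ej; apply: class_uniq (e_in j (s j i)) _; rewrite ej. Qed.

Lemma card_transversal s i : #|` transversal s i| = r.
Proof. by rewrite card_imfset ?size_enum_ord //; apply: transversal_inj. Qed.

Lemma big_transversal (V : nmodType) (F : K -> V) s i :
  \sum_(x <- transversal s i) F x = \sum_(j < r) F (e j (s j i)).
Proof.
by rewrite big_imfset //= ?big_enum // => j j' _ _; apply: transversal_inj.
Qed.

End Transversals.

Lemma fset_family_labelling (K : choiceType) (x0 : K) (r k : nat)
    (C : 'I_r -> {fset K}) : (forall j, #|` C j| = k) ->
  exists e : 'I_r -> 'I_k -> K, [/\ forall j, injective (e j),
    forall j l, e j l \in C j & forall j x, x \in C j -> exists l, e j l = x].
Proof.
move=> C_card; exists (fun j (l : 'I_k) => nth x0 (C j) l); split.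
- move=> j l l' /eqP; rewrite nth_uniq ?fset_uniq ?C_card // => /eqP.
  exact: val_inj.
- by move=> j l; rewrite mem_nth ?C_card.
- move=> j x xC.
  have lt_xk : (index x (C j) < k)%N by rewrite -(C_card j) index_mem.
  by exists (Ordinal lt_xk); rewrite nth_index.
Qed.

Lemma ler_divn_sqrt (R : realType) (n : nat) (x y : R) :
  (0 < n)%N -> 0 <= x -> 0 <= y ->
  x ^+ 2 <= n%:R * y ^+ 2 -> x / n%:R <= y / Num.sqrt n%:R.
Proof.
move=> n_gt0 x_ge0 y_ge0; set t := Num.sqrt _.
have t_gt0 : 0 < t by rewrite sqrtr_gt0 ltr0n.
have -> : n%:R = t ^+ 2 :> R by rewrite sqr_sqrtr ?ler0n.
rewrite -exprMn ler_sqr ?nnegrE ?mulr_ge0 // ?(ltW t_gt0) // => x_le.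
rewrite ler_pdivrMr ?exprn_gt0 //.
by have -> : y / t * t ^+ 2 = t * y by field; rewrite gt_eqF.
Qed.

Theorem theorem6p1 (R : realType) (d r k : nat) (hr : (1 <= r)%N) (hk : (1 <= k)%N)
  (C : 'I_r -> {fset 'rV[R]_d})
  (hCsize : forall j, #|` C j| = k)
  (hCdisj : forall j j', j != j' -> (C j `&` C j')%fset = fset0)
  (P : {fset 'rV[R]_d})
  (hP : forall x, x \in P <-> exists j, x \in C j) :
  exists (q : 'rV[R]_d) (Ps : 'I_k -> {fset 'rV[R]_d}),
    (forall i i', i != i' -> (Ps i `&` Ps i')%fset = fset0) /\
    (forall x, x \in P <-> exists i, x \in Ps i) /\
    (forall i j, #|` (Ps i `&` C j)%fset| = 1%N) /\
    (forall i, dist_set q (conv (Ps i)) <=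
               (1 + Num.sqrt 2) * diam P / Num.sqrt r%:R).
Proof.
have [e [e_inj e_in e_onto]] := fset_family_labelling 0 hCsize.
have e_P j l : e j l \in P by apply/hP; exists j.
have [s _ s_min] := @arg_minP _ _ _ [ffun=> 1%g] predT (energy e) isT.
pose i0 : 'I_k := Ordinal hk.
have D_ge0 := diam_ge0 (e_P (Ordinal hr) i0).
exists (r%:R^-1 *: transversal_sum e s i0), (transversal e s).
split; [exact: transversal_disjoint hCdisj e_inj e_in s | split; [|split]].
- by move=> x; exact: iff_trans (hP x) (transversal_cover e_in e_onto s x).
- by move=> i j; rewrite (transversalI hCdisj e_in) cardfs1.
move=> i.
have centroid : conv (transversal e s i) (r%:R^-1 *: transversal_sum e s i).
  have := @conv_centroid _ _ (transversal e s i).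
  rewrite -cardfs_eq0 (card_transversal hCdisj e_in).
  by rewrite (big_transversal hCdisj e_in) -lt0n; apply.
apply: le_trans (dist_set_le _ centroid) _.
rewrite -scalerBr euclZ ger0_norm ?invr_ge0 ?ler0n // mulrC.
have close :=
  min_energy_transversal_sum_close i0 i e_P (fun s' => s_min s' isT).
apply: le_trans (ler_divn_sqrt hr (eucl_ge0 _) D_ge0 close) _.
by rewrite -mulrA ler_peMl ?lerDl ?divr_ge0 ?sqrtr_ge0 ?D_ge0.
Qed.
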